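(* Let $\mathfrak{S}=(\mathcal{X},\mathsf{S},\gamma,(\Lambda_{a})_{a\in\mathcal{A}})$ be a spectral decomposition system for the Euclidean space $\mathfrak{H}$ with spectral-induced ordering mapping $\tau$, and let $x,y\in\mathcal{X}$. Then: (i) $\tau\circ\tau=\tau$; (ii) for every $a\in\mathcal{A}$, $\|\Lambda_ax\|=\|x\|=\|\tau(x)\|$; (iii) $\langle x,y\rangle\leq\langle\tau(x),\tau(y)\rangle$; (iv) $\langle\tau(x),\tau(y)\rangle=\max_{s\in\mathsf{S}}\langle s\cdot x,y\rangle$; (v) $\|\tau(x)-\tau(y)\|\leq\|x-y\|$; (vi) the range of $\tau$ is a closed convex cone in $\mathcal{X}$; (vii) the orbit $\mathsf{S}\cdot x$ is compact.
   Context: A Euclidean space is a finite-dimensional real inner product space; inner products are written $\langle\cdot,\cdot\rangle$ and norms $\|\cdot\|$. Let $\mathfrak{H}$ and $\mathcal{X}$ be Euclidean spaces, let $\mathsf{S}$ be a group acting on $\mathcal{X}$ by linear isometries, let $\gamma\colon\mathfrak{H}\to\mathcal{X}$, and let $(\Lambda_a)_{a\in\mathcal{A}}$ be a family of linear operators from $\mathcal{X}$ to $\mathfrak{H}$. The orbit of $x$ is $\mathsf{S}\cdot x=\{s\cdot x: s\in\mathsf{S}\}$; a map $f$ on $\mathcal{X}$ is $\mathsf{S}$-invariant if $f(s\cdot x)=f(x)$ for all $s,x$. The tuple is a spectral decomposition system for $\mathfrak{H}$ if: [A] every $\Lambda_a$ is an isometry; [B] there exists an $\mathsf{S}$-invariant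 $\tau\colon\mathcal{X}\to\mathcal{X}$ with $\tau(x)\in\mathsf{S}\cdot x$ for all $x$ and $\gamma\circ\Lambda_a=\tau$ for all $a$; [C] for every $X\in\mathfrak{H}$ there is $a$ with $X=\Lambda_a\gamma(X)$; [D] $\langle X,Y\rangle\leq\langle\gamma(X),\gamma(Y)\rangle$ for all $X,Y\in\mathfrak{H}$. The map $\tau$ in [B] is the spectral-induced ordering mapping. *)

From HB Require Import structures.
From mathcomp Require Import all_boot all_order all_algebra.
From mathcomp Require Import all_classical all_reals all_analysis.
Set Implicit Arguments. Unset Strict Implicit. Unset Printing Implicit Defensive.
Import Order.TTheory GRing.Theory Num.Theory.
Import numFieldNormedType.Exports.
Local Open Scope ring_scope.
Local Open Scope classical_set_scope.

(* Euclidean spaces are modelled as R^n = 'rV[R]_n with the standard inner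
   product (every Euclidean space is isometric to such a space). *)
Definition dotp (R : realType) (n : nat) (u v : 'rV[R]_n) : R :=
  \sum_(i < n) u ord0 i * v ord0 i.

Definition enorm (R : realType) (n : nat) (u : 'rV[R]_n) : R :=
  Num.sqrt (dotp u u).

Definition is_linear_map (R : realType) (n m : nat) (f : 'rV[R]_n -> 'rV[R]_m) :=
  forall (a : R) (u v : 'rV[R]_n), f (a *: u + v) = a *: f u + f v.

Definition group_acting_by_linear_isometries (R : realType) (n : nat)
  (G : Type) (mul : G -> G -> G) (one : G) (inv : G -> G)
  (act : G -> 'rV[R]_n -> 'rV[R]_n) : Prop :=
  [/\ (forall g h k, mul g (mul h k) = mul (mul g h) k),
      (forall g, mul one g = g /\ mul g one = g) &
      (forall g, mul (inv g) g = one /\ mul g (inv g) = one)] /\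
  [/\ (forall x, act one x = x),
      (forall g h x, act (mul g h) x = act g (act h x)) &
      (forall g, is_linear_map (act g) /\ forall x, enorm (act g x) = enorm x)].

Definition act_orbit (R : realType) (n : nat) (G : Type)
  (act : G -> 'rV[R]_n -> 'rV[R]_n) (x : 'rV[R]_n) : set 'rV[R]_n :=
  [set act s x | s in [set: G]].

Definition spectral_ordering_map (R : realType) (m n : nat) (G : Type)
  (act : G -> 'rV[R]_n -> 'rV[R]_n) (gamma : 'rV[R]_m -> 'rV[R]_n)
  (A : Type) (Lam : A -> 'rV[R]_n -> 'rV[R]_m) (tau : 'rV[R]_n -> 'rV[R]_n) : Prop :=
  [/\ (forall s x, tau (act s x) = tau x),
      (forall x, act_orbit act x (tau x)) &
      (forall a x, gamma (Lam a x) = tau x)].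

(* Spectral decomposition system (X, S, gamma, (Lam_a)_a) for H = R^m, X = R^n. *)
Definition spectral_decomposition_system (R : realType) (m n : nat) (G : Type)
  (mul : G -> G -> G) (one : G) (inv : G -> G)
  (act : G -> 'rV[R]_n -> 'rV[R]_n) (gamma : 'rV[R]_m -> 'rV[R]_n)
  (A : Type) (Lam : A -> 'rV[R]_n -> 'rV[R]_m) : Prop :=
  group_acting_by_linear_isometries mul one inv act /\
  (forall a, is_linear_map (Lam a)) /\
  [/\ (forall a x, enorm (Lam a x) = enorm x),
      (exists tau, spectral_ordering_map act gamma Lam tau),
      (forall X : 'rV[R]_m, exists a, X = Lam a (gamma X)) &
      (forall X Y : 'rV[R]_m, dotp X Y <= dotp (gamma X) (gamma Y))].

(* tau x lies in the orbit of x and the group acts isometrically, so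
   ||tau x|| = ||x||; condition [D] transported along the isometries Lam_a gives
   <x, y> <= <tau x, tau y>.  Expanding squares then yields the 1-Lipschitz
   bound, hence continuity, so the range of tau (its fixed-point set) and the
   orbits (fibres of tau) are closed; the orbits are also bounded, hence compact.
   A conic combination w of fixed points satisfies <w, w> <= <w, tau w>, which
   forces ||w - tau w||^2 <= 0. *)
From HB Require Import structures.
From mathcomp Require Import all_boot all_order all_algebra.
From mathcomp Require Import all_classical all_reals all_analysis.
From mathcomp Require Import lra.
Set Implicit Arguments. Unset Strict Implicit. Unset Printing Implicit Defensive.
Import Order.TTheory GRing.Theory Num.Theory.
Import numFieldNormedType.Exports.
Local Open Scope ring_scope.
Local Open Scope classical_set_scope.

Section dotp_theory.
Variables (R : realType) (n : nat).
Implicit Types u v w : 'rV[R]_n.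

Lemma dotpC u v : dotp u v = dotp v u.
Proof. by apply: eq_bigr => i _; rewrite mulrC. Qed.

Lemma dotpDl u v w : dotp (u + v) w = dotp u w + dotp v w.
Proof. by rewrite /dotp -big_split; apply: eq_bigr => i _; rewrite mxE mulrDl. Qed.

Lemma dotpZl a u w : dotp (a *: u) w = a * dotp u w.
Proof. by rewrite /dotp mulr_sumr; apply: eq_bigr => i _; rewrite mxE mulrA. Qed.

Lemma dotpNl u w : dotp (- u) w = - dotp u w.
Proof. by rewrite -scaleN1r dotpZl mulN1r. Qed.

Lemma dotpDr u v w : dotp w (u + v) = dotp w u + dotp w v.
Proof. by rewrite dotpC dotpDl !(dotpC w). Qed.

Lemma dotpNr u w : dotp w (- u) = - dotp w u.
Proof. by rewrite dotpC dotpNl dotpC. Qed.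

Lemma dotpDD u v : dotp (u + v) (u + v) = dotp u u + dotp v v + 2 * dotp u v.
Proof. by rewrite dotpDl !dotpDr (dotpC v u); lra. Qed.

Lemma dotpBB u v : dotp (u - v) (u - v) = dotp u u + dotp v v - 2 * dotp u v.
Proof. by rewrite dotpDl !dotpDr !dotpNl !dotpNr (dotpC v u); lra. Qed.

Lemma dotpp_ge0 u : 0 <= dotp u u.
Proof. by apply: sumr_ge0 => i _; rewrite -expr2 sqr_ge0. Qed.

Lemma dotpp_eq0 u : (dotp u u == 0) = (u == 0).
Proof.
apply/idP/eqP => [/eqP uu0|->]; last by rewrite /dotp big1 // => i _; rewrite mxE mul0r.
apply/rowP => i; rewrite !mxE; apply/eqP; rewrite -sqrf_eq0 expr2.
have /psumr_eq0P uu_eq0 := uu0.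
by apply/eqP/uu_eq0 => // j _; rewrite -expr2 sqr_ge0.
Qed.

Lemma enorm_sqr u : enorm u ^+ 2 = dotp u u.
Proof. by rewrite sqr_sqrtr // dotpp_ge0. Qed.

Lemma enorm_le u v : dotp u u <= dotp v v -> enorm u <= enorm v.
Proof. by move=> uv; rewrite /enorm ler_sqrt // dotpp_ge0. Qed.

Lemma mx_norm_le_enorm u : `|u| <= enorm u.
Proof.
rewrite [leLHS]/Num.norm /= mx_normrE.
apply/bigmax_leP; split=> [|[i j] _ /=]; first exact: sqrtr_ge0.
rewrite (ord1 i) -sqrtr_sqr /enorm ler_sqrt ?dotpp_ge0 // /dotp (bigD1 j) //=.
rewrite -expr2 -real_normK ?num_real // lerDl.
by apply: sumr_ge0 => k _; rewrite -expr2 sqr_ge0.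
Qed.

Lemma enorm_le_mx_norm u : enorm u <= n%:R * `|u|.
Proof.
rewrite -[n%:R * _]ger0_norm ?mulr_ge0 // -sqrtr_sqr /enorm ler_sqrt ?sqr_ge0 //.
apply: (@le_trans _ _ (\sum_(i < n) `|u| ^+ 2)).
  apply: ler_sum => i _; rewrite -expr2 -real_normK ?num_real // lerXn2r ?nnegrE //.
  by rewrite [leRHS]/Num.norm /= mx_normrE; apply/bigmax_geP; right; exists (ord0, i).
rewrite sumr_const card_ord exprMn -[_ *+ n]mulr_natl ler_wpM2r ?sqr_ge0 // -natrX ler_nat.
by case: n {u} => // k; rewrite expnS leq_pmulr // expn_gt0.
Qed.

End dotp_theory.

Lemma linear_isometry_dotp (R : realType) (n m : nat) (f : 'rV[R]_n -> 'rV[R]_m) :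
  is_linear_map f -> (forall x, enorm (f x) = enorm x) ->
  forall u v, dotp (f u) (f v) = dotp u v.
Proof.
move=> f_lin f_iso u v.
have f_dotpp x : dotp (f x) (f x) = dotp x x by rewrite -!enorm_sqr f_iso.
have fD : f (u + v) = f u + f v by rewrite -[u]scale1r f_lin !scale1r.
by have := f_dotpp (u + v); rewrite fD !dotpDD !f_dotpp; lra.
Qed.

Lemma klipschitz_continuous (K : realFieldType) (V W : normedModType K) (k : K)
    (f : V -> W) : k.-lipschitz f -> continuous f.
Proof.
move=> f_lip u; apply/cvgrPdist_lt => e e0.
have k1_gt0 : 0 < Num.max k 1 by rewrite lt_max ltr01 orbT.
apply/nbhs_normP; exists (e / Num.max k 1); first by rewrite /= divr_gt0.
move=> v /= uv; have /= := f_lip (u, v) (conj I I) => /le_lt_trans; apply.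
apply: le_lt_trans (_ : Num.max k 1 * `|u - v| < e).
  by rewrite ler_wpM2r // le_max lexx.
by rewrite -ltr_pdivlMl // mulrC.
Qed.

Lemma dotp_le_tau (R : realType) (m n : nat) (gamma : 'rV[R]_m -> 'rV[R]_n)
    (L : 'rV[R]_n -> 'rV[R]_m) (tau : 'rV[R]_n -> 'rV[R]_n) :
  is_linear_map L -> (forall x, enorm (L x) = enorm x) ->
  (forall x, gamma (L x) = tau x) ->
  (forall X Y, dotp X Y <= dotp (gamma X) (gamma Y)) ->
  forall u v, dotp u v <= dotp (tau u) (tau v).
Proof.
move=> L_lin L_iso gammaL gamma_ge u v.
by rewrite -(linear_isometry_dotp L_lin L_iso) -!gammaL.
Qed.

Section spectral_ordering_map.
Variables (R : realType) (n : nat) (G : Type).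
Variables (mul : G -> G -> G) (one : G) (inv : G -> G).
Variables (act : G -> 'rV[R]_n -> 'rV[R]_n) (tau : 'rV[R]_n -> 'rV[R]_n).
Hypothesis act1 : forall x, act one x = x.
Hypothesis actM : forall g h x, act (mul g h) x = act g (act h x).
Hypothesis mulVg : forall g, mul (inv g) g = one.
Hypothesis act_dotp : forall g u v, dotp (act g u) (act g v) = dotp u v.
Hypothesis tau_act : forall g x, tau (act g x) = tau x.
Hypothesis tau_orbit : forall x, act_orbit act x (tau x).
Hypothesis tau_dotp_ge : forall u v, dotp u v <= dotp (tau u) (tau v).
Implicit Types u v w x y z : 'rV[R]_n.

Lemma actKV g x : act (inv g) (act g x) = x.
Proof. by rewrite -actM mulVg act1. Qed.

Lemma tau_idem z : tau (tau z) = tau z.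
Proof. by have [s _ tau_z] := tau_orbit z; rewrite -{1}tau_z tau_act. Qed.

Lemma dotpp_tau u : dotp (tau u) (tau u) = dotp u u.
Proof. by have [s _ <-] := tau_orbit u; rewrite act_dotp. Qed.

Lemma enorm_tau x : enorm (tau x) = enorm x.
Proof. by rewrite /enorm dotpp_tau. Qed.

Lemma dotp_act_le_tau s x y : dotp (act s x) y <= dotp (tau x) (tau y).
Proof. by rewrite -(tau_act s x). Qed.

Lemma dotp_tau_attained x y : exists s, dotp (act s x) y = dotp (tau x) (tau y).
Proof.
have [s _ <-] := tau_orbit x; have [t _ <-] := tau_orbit y.
by exists (mul (inv t) s); rewrite actM -[RHS](act_dotp (inv t)) actKV.
Qed.

Lemma enorm_tauB u v : enorm (tau u - tau v) <= enorm (u - v).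
Proof. by apply: enorm_le; rewrite !dotpBB !dotpp_tau; have := tau_dotp_ge u v; lra. Qed.

Lemma continuous_tau : continuous tau.
Proof.
apply: (@klipschitz_continuous _ _ _ n%:R) => -[u v] _ /=.
apply: le_trans (mx_norm_le_enorm _) _; apply: le_trans (enorm_tauB u v) _.
exact: enorm_le_mx_norm.
Qed.

Lemma range_tau_fixed : range tau = [set u | tau u = u].
Proof.
apply/seteqP; split=> [_ [w _ <-]|u /= <-]; last by exists u.
exact: tau_idem.
Qed.

Lemma closed_range_tau : closed (range tau).
Proof.
have -> : range tau = (tau \- id) @^-1` [set 0].
  rewrite range_tau_fixed; apply/seteqP; split=> u /= => [->|/eqP]; first exact: subrr.
  by rewrite subr_eq0 => /eqP.
apply: (proj1 (continuous_closedP _)).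
  by move=> u; apply: continuousB; [exact: continuous_tau | exact: cvg_id].
exact/accessible_closed_set1/hausdorff_accessible/norm_hausdorff.
Qed.

Lemma tau_fixed_of_dotp_le w : dotp w w <= dotp w (tau w) -> tau w = w.
Proof.
move=> w_le; apply/eqP; rewrite -subr_eq0 -dotpp_eq0 eq_le dotpp_ge0 andbT.
by rewrite dotpBB dotpp_tau dotpC; lra.
Qed.

Lemma range_tau_conic u v a b : range tau u -> range tau v -> 0 <= a -> 0 <= b ->
  range tau (a *: u + b *: v).
Proof.
rewrite range_tau_fixed /= => tau_u tau_v a_ge0 b_ge0.
apply: tau_fixed_of_dotp_le; set w := a *: u + b *: v.
have dotp_w z : dotp w z = a * dotp u z + b * dotp v z by rewrite dotpDl !dotpZl.
rewrite !dotp_w; apply: lerD; apply: ler_wpM2l => //.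
  by rewrite -{2}tau_u tau_dotp_ge.
by rewrite -{2}tau_v tau_dotp_ge.
Qed.

Lemma orbit_tau_fibre x : act_orbit act x = tau @^-1` [set tau x].
Proof.
apply/seteqP; split=> [_ [s _ <-]|z /= tau_zx]; first exact: tau_act.
have [s _ tau_x] := tau_orbit x; have [t _ tau_z] := tau_orbit z.
by exists (mul (inv t) s) => //; rewrite actM tau_x -tau_zx -tau_z actKV.
Qed.

Lemma compact_orbit x : compact (act_orbit act x).
Proof.
apply: bounded_closed_compact.
  exists (enorm x); split=> [|M x_lt_M _ [s _ <-]]; first exact: num_real.
  apply: le_trans (mx_norm_le_enorm _) _.
  by rewrite /enorm act_dotp; exact: ltW.
rewrite orbit_tau_fibre; apply: (proj1 (continuous_closedP _) continuous_tau).
exact/accessible_closed_set1/hausdorff_accessible/norm_hausdorff.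
Qed.

End spectral_ordering_map.

Theorem proposition3p3 (R : realType) (m n : nat) (G : Type)
  (mul : G -> G -> G) (one : G) (inv : G -> G)
  (act : G -> 'rV[R]_n -> 'rV[R]_n) (gamma : 'rV[R]_m -> 'rV[R]_n)
  (A : Type) (Lam : A -> 'rV[R]_n -> 'rV[R]_m) (tau : 'rV[R]_n -> 'rV[R]_n) :
  spectral_decomposition_system mul one inv act gamma Lam ->
  spectral_ordering_map act gamma Lam tau ->
  forall x y : 'rV[R]_n,
  [/\ (forall z, tau (tau z) = tau z),
      (forall a, enorm (Lam a x) = enorm x /\ enorm x = enorm (tau x)) &
      dotp x y <= dotp (tau x) (tau y)] /\
  [/\
      ((exists s, dotp (act s x) y = dotp (tau x) (tau y)) /\
       (forall s, dotp (act s x) y <= dotp (tau x) (tau y))),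
      enorm (tau x - tau y) <= enorm (x - y),
      (closed (range tau) /\
       (forall u v, range tau u -> range tau v -> forall a b : R,
          0 <= a -> 0 <= b -> range tau (a *: u + b *: v))) &
      compact (act_orbit act x)].
Proof.
move=> [[[_ _ mulV] [act1 actM act_iso]] [Lam_lin [Lam_iso _ Lam_gamma gamma_ge]]].
move=> [tau_act tau_orbit gammaLam] x y.
have act_dotp g : forall u v, dotp (act g u) (act g v) = dotp u v.
  by apply: linear_isometry_dotp; [exact: (act_iso g).1 | exact: (act_iso g).2].
have [a0 _] := Lam_gamma 0.
have tau_ge := dotp_le_tau (Lam_lin a0) (Lam_iso a0) (gammaLam a0) gamma_ge.
have mulVg g := (mulV g).1.
split; split.
- exact: tau_idem tau_act tau_orbit.
- by move=> a; rewrite Lam_iso (enorm_tau act_dotp tau_orbit).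
- exact: tau_ge.
- split; last by move=> s; exact: (dotp_act_le_tau tau_act tau_ge).
  exact: (dotp_tau_attained act1 actM mulVg act_dotp tau_orbit).
- exact: (enorm_tauB act_dotp tau_orbit tau_ge).
- split; first exact: (closed_range_tau act_dotp tau_act tau_orbit tau_ge).
  move=> u v tau_u tau_v a b.
  exact: (range_tau_conic act_dotp tau_act tau_orbit tau_ge).
- exact: (compact_orbit act1 actM mulVg act_dotp tau_act tau_orbit tau_ge).
Qed.
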